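(* There exist a metric space $(\mathcal X,d)$, a set of candidate locations $\mathcal C\subseteq\mathcal X$ and a number of facilities $\ell$ such that for every $n$, every $k<n$ and every panel decision function $\widetilde q:\mathcal X^k\to\mathcal C^\ell$, there exist agent locations $x_1,\dots,x_n\in\mathcal X$ such that for every $\rho>1$, $$\mathbb E_{S\sim\mathcal U_{k,n}}\big[\textsc{Social-Cost}(\widetilde q(S))\big]>\rho\cdot\textsc{Social-Opt}.$$
   Context: For $y=(y_1,\dots,y_\ell)\in\mathcal C^\ell$, agent $i$'s cost is $\mathrm{Cost}_i(y)=\min_{j\in[\ell]}d(x_i,y_j)$; $\textsc{Social-Cost}(y)=\frac1n\sum_{i=1}^n\mathrm{Cost}_i(y)$ and $\textsc{Social-Opt}=\min_{y\in\mathcal C^\ell}\textsc{Social-Cost}(y)$. For a panel $S\subseteq[n]$ of size $k$, $\widetilde q(S)$ denotes $\widetilde q$ applied to $(x_i)_{i\in S}$. $\mathcal U_{k,n}$ is the uniform distribution over size-$k$ subsets of $[n]$. *)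

From Stdlib Require Import Reals.
From mathcomp Require Import all_boot all_order all_algebra.
From mathcomp Require Import Rstruct.
Set Implicit Arguments. Unset Strict Implicit. Unset Printing Implicit Defensive.
Import Order.TTheory GRing.Theory Num.Theory.
Local Open Scope ring_scope.

Definition is_metric (X : Type) (d : X -> X -> R) : Prop :=
  (forall x y, 0 <= d x y) /\
  (forall x y, d x y = 0 <-> x = y) /\
  (forall x y, d x y = d y x) /\
  (forall x y z, d x z <= d x y + d y z).

(* A facility profile y = (y_1,...,y_l) with l = l'.+1 >= 1 facilities. *)
Definition cost (X : Type) (d : X -> X -> R) (l' : nat)
  (xi : X) (y : 'I_l'.+1 -> X) : R :=
  \big[Num.min/d xi (y ord0)]_(j < l'.+1) d xi (y j).

Definition social_cost (X : Type) (d : X -> X -> R) (l' n : nat)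
  (x : 'I_n -> X) (y : 'I_l'.+1 -> X) : R :=
  (\sum_(i < n) cost d (x i) y) / n%:R.

Definition in_cands (X : Type) (C : X -> Prop) (l' : nat) (y : 'I_l'.+1 -> X) : Prop :=
  forall j, C (y j).

Definition is_social_opt (X : Type) (d : X -> X -> R) (C : X -> Prop) (l' n : nat)
  (x : 'I_n -> X) (o : R) : Prop :=
  (exists y : 'I_l'.+1 -> X, in_cands C y /\ social_cost d x y = o) /\
  (forall y : 'I_l'.+1 -> X, in_cands C y -> o <= social_cost d x y).

(* The profile (x_i)_{i in S}, listed in increasing order of the index i,
   as a k-tuple; x0 is an irrelevant default (used only when #|S| <> k). *)
Definition panel (X : Type) (x0 : X) (n k : nat) (x : 'I_n -> X)
  (S : {set 'I_n}) : 'I_k -> X :=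
  fun i => nth x0 [seq x j | j <- enum S] i.

Definition expected_panel_cost (X : Type) (d : X -> X -> R) (x0 : X) (l' n k : nat)
  (q : ('I_k -> X) -> ('I_l'.+1 -> X)) (x : 'I_n -> X) : R :=
  (\sum_(S : {set 'I_n} | #|S| == k) social_cost d x (q (panel x0 x S)))
  / #|[set S : {set 'I_n} | #|S| == k]|%:R.
Arguments is_social_opt {X} d C l' {n} x o.

From Stdlib Require Import Reals.
From mathcomp Require Import all_boot all_order all_algebra.
From mathcomp Require Import Rstruct.
From Stdlib Require Import FunctionalExtensionality.
Set Implicit Arguments.
Unset Strict Implicit.
Unset Printing Implicit Defensive.

Import Order.TTheory GRing.Theory Num.Theory.
Local Open Scope ring_scope.

(* Take the discrete metric on [nat], two facilities and all points as
   candidates.  Let [y] be the facilities the rule proposes when every panelist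
   sits at [0], and let [b] be a point outside [y].  Put agent [k] at [b] and
   everybody else at [0].  The optimum [(0, b)] costs nothing, whereas the panel
   of the first [k] agents sees only zeros, proposes [y], and leaves agent [k]
   at positive distance; so the expected cost is positive and no ratio [rho]
   bounds it by [rho * 0]. *)

Definition discrete_metric (T : eqType) (a b : T) : R := (a != b)%:R.

Lemma discrete_metric_is_metric (T : eqType) : is_metric (@discrete_metric T).
Proof.
rewrite /discrete_metric; split; [|split; [|split]].
- by move=> a b; rewrite ler0n.
- move=> a b; split=> [|->]; last by rewrite eqxx.
  by case: eqVneq => // _ /eqP; rewrite oner_eq0.
- by move=> a b; rewrite eq_sym.
- move=> a b c; rewrite -natrD ler_nat.
  have [-> | _] := eqVneq a b; first by rewrite add0n.
  by rewrite add1n (leq_trans (leq_b1 _)).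
Qed.

Section Costs.

Variables (X : Type) (d : X -> X -> R).
Hypothesis d_ge0 : forall a b, 0 <= d a b.

Lemma cost_ge0 l' (xi : X) (y : 'I_l'.+1 -> X) : 0 <= cost d xi y.
Proof. by apply: le_bigmin => [|j _]; apply: d_ge0. Qed.

Lemma cost_le l' (xi : X) (y : 'I_l'.+1 -> X) j : cost d xi y <= d xi (y j).
Proof. exact: bigmin_le. Qed.

Lemma social_cost_ge0 l' n (x : 'I_n -> X) (y : 'I_l'.+1 -> X) :
  0 <= social_cost d x y.
Proof.
by rewrite /social_cost RdivE divr_ge0 ?ler0n ?sumr_ge0 // => i _; apply: cost_ge0.
Qed.

Lemma social_cost_gt0 l' n (x : 'I_n -> X) (y : 'I_l'.+1 -> X) i :
  0 < cost d (x i) y -> 0 < social_cost d x y.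
Proof.
move=> cost_i_gt0; rewrite /social_cost RdivE.
rewrite divr_gt0 ?ltr0n ?(leq_ltn_trans _ (ltn_ord i)) //.
rewrite (bigD1 i) //= ltr_wpDr // sumr_ge0 // => j _; exact: cost_ge0.
Qed.

Lemma social_cost_eq0 l' n (x : 'I_n -> X) (y : 'I_l'.+1 -> X) :
  (forall a, d a a = 0) -> (forall i, exists j, y j = x i) -> social_cost d x y = 0.
Proof.
move=> d_refl cover; rewrite /social_cost RdivE big1 ?mul0r // => i _.
have [j <-] := cover i.
by apply/eqP; rewrite eq_le cost_ge0 andbT -(d_refl (y j)) cost_le.
Qed.

Lemma expected_panel_cost_gt0 (x0 : X) l' n k
    (q : ('I_k -> X) -> ('I_l'.+1 -> X)) (x : 'I_n -> X) (S : {set 'I_n}) :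
  #|S| = k -> 0 < social_cost d x (q (panel x0 x S)) ->
  0 < expected_panel_cost d x0 q x.
Proof.
move=> cardS panel_cost_gt0; rewrite /expected_panel_cost RdivE.
have S_sized : #|S| == k by rewrite cardS.
rewrite divr_gt0 // ?ltr0n ?card_gt0; last by apply/set0Pn; exists S; rewrite inE.
rewrite (bigD1 S) //= ltr_wpDr // sumr_ge0 // => T _; exact: social_cost_ge0.
Qed.

End Costs.

Lemma cost_gt0 (X : Type) (d : X -> X -> R) l' (xi : X) (y : 'I_l'.+1 -> X) :
  is_metric d -> (forall j, y j <> xi) -> 0 < cost d xi y.
Proof.
move=> [d_ge0 [d_eq0 _]] y_far; apply: lt_bigmin => [|j _].
all: by rewrite lt_def d_ge0 andbT; apply/eqP => /d_eq0 /esym; apply: y_far.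
Qed.

Lemma panel_const (X : Type) (c : X) n k (x : 'I_n -> X) (S : {set 'I_n}) :
  {in S, forall i, x i = c} -> panel c x S = fun _ : 'I_k => c.
Proof.
move=> x_c; apply: functional_extensionality => i; rewrite /panel.
have -> : [seq x j | j <- enum S] = [seq c | _ <- enum S].
  by apply/eq_in_map => j; rewrite mem_enum; apply: x_c.
by elim: (enum S) (val i) => [|_ s IHs] [|m] //=.
Qed.

Lemma exists_fresh_nat l (y : 'I_l -> nat) : exists b, forall j, y j <> b.
Proof.
exists (\max_j y j).+1 => j /eqP; apply/negP.
by rewrite neq_ltn ltnS leq_bigmax.
Qed.

Lemma exists_prefix_set n k :
  (k <= n)%N -> exists2 S : {set 'I_n}, #|S| = k & {in S, forall i : 'I_n, (i < k)%N}.
Proof.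
move=> le_kn; exists [set widen_ord le_kn i | i : 'I_k].
  by rewrite card_imset ?card_ord // => i j /(congr1 val) /= /val_inj.
by move=> _ /imsetP[i _ ->]; exact: (ltn_ord i).
Qed.

Theorem theorem4p15 :
  exists (X : Type) (d : X -> X -> R) (C : X -> Prop) (l' : nat) (c0 : X),
    is_metric d /\ C c0 /\
    forall (n k : nat), (k < n)%N ->
    forall q : ('I_k -> X) -> ('I_l'.+1 -> X),
      (forall p, in_cands C (q p)) ->
      exists x : 'I_n -> X,
        exists opt : R, is_social_opt d C l' x opt /\
        forall rho : R, 1 < rho ->
          expected_panel_cost d c0 q x > rho * opt.
Proof.
have d_metric := @discrete_metric_is_metric nat.
have d_ge0 := d_metric.1.
exists nat, (@discrete_metric nat), (fun _ => True), 1%N, 0%N.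
split=> //; split=> // n k lt_kn q _.
have [S cardS S_lt_k] := exists_prefix_set (ltnW lt_kn).
have [b b_fresh] := exists_fresh_nat (q (fun _ => 0%N)).
pose agent_k : 'I_n := Ordinal lt_kn.
pose x (i : 'I_n) := if i == agent_k then b else 0%N.
exists x, 0; split.
  split=> [|y _]; last exact: social_cost_ge0.
  exists (fun j : 'I_2 => if j == ord0 then 0%N else b); split=> //.
  apply: social_cost_eq0 => // [a | i]; first by rewrite /discrete_metric eqxx.
  by rewrite /x; case: ifP; [exists ord_max | exists ord0].
move=> rho _; rewrite mulr0; apply: (expected_panel_cost_gt0 d_ge0 cardS).
have -> : panel 0%N x S = fun _ : 'I_k => 0%N.
  by apply: panel_const => i /S_lt_k lt_ik; rewrite /x -val_eqE /= ltn_eqF.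
by apply: (social_cost_gt0 d_ge0 (i := agent_k)); apply: cost_gt0; rewrite /x ?eqxx.
Qed.
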